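(* Let $k$ and $s$ be positive integers with $s\mid k$. Then for every integer $t$ with $0\le t\le s-1$, $$c_{s}(t)=\sum_{j=0}^{k/s-1}\sigma_{k}^{(0)}(js+t;s).$$
   Context: For a positive integer $m$, $(q)_m=(1-q)\cdots(1-q^m)$, $(q)_0=1$. For integers $k\ge1$ and $1\le s\le k$, $\sigma^{(0)}_k(t;s)$ ($0\le t\le k-1$) is the coefficient of $q^t$ in the remainder of $(q)_{s-1}$ upon division by $1-q^k$. $c_s(t)=\sum_{1\le h\le s,\ \gcd(h,s)=1}e^{2\pi i ht/s}$ is the Ramanujan sum. *)

From HB Require Import structures.
From mathcomp Require Import all_boot all_order all_algebra.
From mathcomp Require Import all_classical all_reals all_analysis.
From mathcomp Require Import complex.
Set Implicit Arguments. Unset Strict Implicit. Unset Printing Implicit Defensive.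
Import Order.TTheory GRing.Theory Num.Theory.
Local Open Scope ring_scope.

Definition qpoch (m : nat) : {poly int} := \prod_(1 <= i < m.+1) (1 - 'X^i).

Definition sigma0 (k s t : nat) : int := ((qpoch s.-1) %% (1 - 'X^k))`_t.

Definition ramanujan_sum (R : realType) (s : nat) (t : int) : R[i] :=
  \sum_(1 <= h < s.+1 | coprime h s)
    let x : R := 2 * pi * h%:R * t%:~R / s%:R in
    (Complex (cos x) (sin x)).

From HB Require Import structures.
From mathcomp Require Import all_boot all_order all_algebra.
From mathcomp Require Import all_classical all_reals all_analysis.
From mathcomp Require Import complex.
From mathcomp Require Import zify ring lra.
Set Implicit Arguments. Unset Strict Implicit. Unset Printing Implicit Defensive.
Import Order.TTheory GRing.Theory Num.Theory.
Local Open Scope ring_scope.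

(* Let z be a primitive s-th root of unity and r the remainder of (q)_{s-1}
   modulo 1 - q^k.  As s divides k, every z^m is a root of 1 - q^k, so
   r(z^m) = prod_{0<i<s} (1 - z^{mi}), which is s when z^m is again primitive
   (evaluate (X^s - 1)/(X - 1) = prod_{0<i<s} (X - z^{mi}) at 1) and 0 otherwise
   (some factor 1 - z^{mi} vanishes).  The roots-of-unity filter
   sum_{m<s} z^{-mt} r(z^m) = s sum_j r_{js+t}, with z^{-mt} written z^{m(s-t)},
   turns s sum_j sigma0(js+t) into s sum_{gcd(m,s)=1} z^{-mt}, and the
   substitution h = s - m identifies the latter sum with c_s(t) for
   z = e^{2 pi i/s}. *)

Lemma coprime_subnl m s : (m <= s)%N -> coprime (s - m) s = coprime m s.
Proof.
by move=> le_ms; rewrite /coprime -{2 3}(subnK le_ms) gcdnDl gcdnDr gcdnC.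
Qed.

Lemma dvdn_subnD s t u : (t < s)%N -> (u < s)%N -> (s %| s - t + u)%N = (u == t).
Proof.
move=> lt_ts lt_us; case: eqP => [->|neq_ut]; first by rewrite subnK ?dvdnn // ltnW.
by apply/negP => /dvdnP [[|[|c]] /=]; lia.
Qed.

Lemma sum_ord_mul (V : nmodType) (F : nat -> V) K s :
  \sum_(n < K * s) F n = \sum_(j < K) \sum_(u < s) F (j * s + u)%N.
Proof.
elim: K => [|K IH]; first by rewrite !big_ord0.
by rewrite big_ord_recr /= -IH mulSnr big_split_ord.
Qed.

Lemma horner_map_modp (R S : idomainType) (f : {rmorphism R -> S})
    (p q : {poly R}) x :
  lead_coef q \is a GRing.unit -> root (map_poly f q) x ->
  (map_poly f (p %% q)).[x] = (map_poly f p).[x].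
Proof.
move=> unit_q /rootP qx0.
rewrite {2}(Pdiv.IdomainUnit.divp_eq unit_q p) rmorphD rmorphM /= hornerD hornerM qx0.
by rewrite mulr0 add0r.
Qed.

Lemma horner_qpoch (R : comNzRingType) n x :
  (map_poly intr (qpoch n) : {poly R}).[x] = \prod_(1 <= i < n.+1) (1 - x ^+ i).
Proof.
rewrite rmorph_prod horner_prod; apply: eq_bigr => i _.
by rewrite rmorphB rmorph1 rmorphXn /= map_polyX hornerD hornerN hornerXn hornerC.
Qed.

Section PrimitiveRoot.
Variables (F : fieldType) (s : nat) (z : F).
Hypothesis prim_z : s.-primitive_root z.

Lemma sum_prim_root_exp n :
  \sum_(m < s) z ^+ (m * n) = if (s %| n)%N then s%:R else 0.
Proof.
under eq_bigr => m _ do rewrite mulnC exprM.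
case: ifP => [dvd_sn|ndvd_sn].
  move: dvd_sn; rewrite (prim_order_dvd prim_z) => /eqP ->.
  by rewrite (eq_bigr (fun _ => 1)) ?sumr_const ?card_ord // => m _; rewrite expr1n.
have zn_neq1 : z ^+ n - 1 != 0 by rewrite subr_eq0 -(prim_order_dvd prim_z) ndvd_sn.
apply: (mulfI zn_neq1); rewrite mulr0 -subrX1 -exprM mulnC exprM.
by rewrite (prim_expr_order prim_z) expr1n subrr.
Qed.

Lemma roots_of_unity_filter (p : {poly F}) K t :
  (size p <= K * s)%N -> (t < s)%N ->
  \sum_(m < s) z ^+ (m * (s - t)) * p.[z ^+ m] = s%:R * \sum_(j < K) p`_(j * s + t).
Proof.
move=> size_p lt_ts.
have inner_sum j (u : 'I_s) :
    \sum_(m < s) z ^+ (m * (s - t)) * (p`_(j * s + u) * (z ^+ m) ^+ (j * s + u)) =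
    if (u == t :> nat) then p`_(j * s + u) * s%:R else 0.
  under eq_bigr => m _ do rewrite mulrCA -exprM -exprD -mulnDr.
  rewrite -big_distrr /= sum_prim_root_exp addnCA dvdn_addr ?dvdn_mull //.
  by rewrite dvdn_subnD ?ltn_ord //; case: (_ == _); rewrite ?mulr0.
under eq_bigr => m _ do rewrite (horner_coef_wide _ size_p)
  (sum_ord_mul (fun n => p`_n * (z ^+ m) ^+ n)) big_distrr.
rewrite exchange_big big_distrr; apply: eq_bigr => j _ /=.
under eq_bigr => m _ do rewrite big_distrr.
rewrite exchange_big (eq_bigr _ (fun u _ => inner_sum j u)) -big_mkcond.
by rewrite (big_ord1_eq _ (fun u => p`_(j * s + u) * s%:R)) lt_ts mulrC.
Qed.

Lemma prim_root_prod_one_sub n (w : F) : n.-primitive_root w ->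
  \prod_(1 <= i < n) (1 - w ^+ i) = n%:R.
Proof.
move=> prim_w; have n_gt0 := prim_order_gt0 prim_w.
have := factor_Xn_sub_1 prim_w.
rewrite big_ltn // expr0 polyC1 subrX1 => /mulfI.
have X_sub1_neq0 : ('X - 1 : {poly F}) != 0 by rewrite -polyC1 polyXsubC_eq0.
move=> /(_ X_sub1_neq0)/(congr1 (horner^~ 1)).
rewrite /= horner_prod horner_sum.
under eq_bigr => i _ do rewrite hornerXsubC.
move=> ->; under eq_bigr => i _ do rewrite hornerXn expr1n.
by rewrite sumr_const card_ord.
Qed.

Lemma prod_one_sub_prim_root_exp m :
  \prod_(1 <= i < s) (1 - (z ^+ m) ^+ i) = if coprime m s then s%:R else 0.
Proof.
have s_gt0 := prim_order_gt0 prim_z.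
case: ifP => [co_ms|nco_ms].
  by apply: prim_root_prod_one_sub; rewrite prim_root_exp_coprime.
apply/eqP; rewrite prodf_seq_eq0; apply/hasP.
set g := gcdn m s.
have g_gt1 : (1 < g)%N.
  by move: nco_ms; rewrite /coprime -/g ltn_neqAle gcdn_gt0 s_gt0 orbT andbT eq_sym => ->.
have le_gs : (g <= s)%N by apply: dvdn_leq => //; apply: dvdn_gcdr.
exists (s %/ g)%N; first by rewrite mem_index_iota divn_gt0 ?(ltnW g_gt1) // le_gs ltn_Pdiv.
rewrite /= -exprM muln_divCA_gcd -/g exprM (prim_expr_order prim_z) expr1n subrr.
by rewrite eqxx.
Qed.

Lemma sum_coprime_exp_rev t : (t <= s)%N ->
  \sum_(1 <= h < s.+1 | coprime h s) z ^+ (h * t) =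
  \sum_(m < s | coprime m s) z ^+ (m * (s - t)).
Proof.
move=> le_ts; have s_gt0 := prim_order_gt0 prim_z.
have z_neq0 : z != 0 by rewrite (prim_root_eq0 prim_z) -lt0n.
rewrite big_add1 /= big_nat_rev /= big_mkord add0n.
apply: eq_big => [[m lt_ms]|[m lt_ms] _] /=; rewrite -subSn // subSS.
  by rewrite coprime_subnl // ltnW.
apply: (mulIf (expf_neq0 (m * t) z_neq0)).
rewrite -!exprD -mulnDl -mulnDr !subnK ?(ltnW lt_ms) //.
by rewrite [in RHS]mulnC !exprM (prim_expr_order prim_z) !expr1n.
Qed.

Lemma sum_sigma0_prim_root k t : (0 < k)%N -> (s %| k)%N -> (t < s)%N ->
  (\sum_(0 <= j < k %/ s) sigma0 k s (j * s + t))%:~R =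
  \sum_(m < s | coprime m s) z ^+ (m * (s - t)).
Proof.
move=> k_gt0 dvd_sk lt_ts; have s_gt0 := prim_order_gt0 prim_z.
set q : {poly int} := 1 - 'X^k.
set r : {poly F} := map_poly intr (qpoch s.-1 %% q).
have size_q : size q = k.+1 by rewrite /q -opprB size_polyN -polyC1 size_XnsubC.
have size_r : (size r <= k %/ s * s)%N.
  have : (size (qpoch s.-1 %% q)%R <= k)%N.
    by rewrite -ltnS -size_q ltn_modp -size_poly_gt0 size_q.
  rewrite divnK // => /leq_sizeP r_eq0; apply/leq_sizeP => i le_ki.
  by rewrite coef_map r_eq0.
have unit_q : lead_coef q \is a GRing.unit.
  by rewrite /q -opprB lead_coefN -polyC1 (monicP (monicXnsubC 1 k_gt0)) unitrN1.
have r_eval m : r.[z ^+ m] = if coprime m s then s%:R else 0.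
  rewrite horner_map_modp // ?horner_qpoch ?prednK ?prod_one_sub_prim_root_exp //.
  apply/rootP; rewrite rmorphB rmorph1 rmorphXn /= map_polyX hornerD hornerN hornerXn hornerC.
  by rewrite -exprM -(divnK dvd_sk) mulnA mulnC exprM (prim_expr_order prim_z) expr1n subrr.
apply: (mulfI (prim_root_natf_neq0 prim_z)).
rewrite rmorph_sum big_mkord (eq_bigr (fun j : 'I_(k %/ s) => r`_(j * s + t))); last first.
  by move=> j _; rewrite coef_map.
rewrite -roots_of_unity_filter // big_distrr [RHS]big_mkcond; apply: eq_bigr => m _ /=.
by rewrite r_eval; case: ifP; rewrite ?mulr0 // mulrC.
Qed.

End PrimitiveRoot.

Section ComplexExponential.
Variable R : realType.

Definition expi (x : R) : R[i] := Complex (cos x) (sin x).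

Lemma expiD x y : expi (x + y) = expi x * expi y.
Proof. by rewrite /expi cosD sinD; congr Complex; rewrite addrC. Qed.

Lemma expiMn n x : expi (n%:R * x) = expi x ^+ n.
Proof.
elim: n => [|n IH]; first by rewrite mul0r /expi cos0 sin0.
by rewrite -natr1 mulrDl mul1r expiD IH exprSr.
Qed.

Lemma cos_lt1 (y : R) : 0 < y < pi *+ 2 -> cos y < 1.
Proof.
move=> /andP[y_gt0 y_lt2pi]; have pi_pos := pi_gt0 R.
have cos_lt1_0pi w : 0 < w <= pi -> cos w < 1.
  move=> /andP[w_gt0 w_lepi]; rewrite -[X in _ < X]cos0.
  by rewrite ltr_cos // !in_itv /=; apply/andP; split; lra.
have [y_lepi|pi_lty] := lerP y pi; first by apply: cos_lt1_0pi; rewrite y_gt0.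
rewrite -cosN -(cosD2pi (- y)) addrC; apply: cos_lt1_0pi.
by apply/andP; split; rewrite mulr2n; lra.
Qed.

Lemma expi_neq1 y : 0 < y < pi *+ 2 -> expi y != 1.
Proof.
move=> /cos_lt1 cos_y_lt1; apply/eqP => /(congr1 (@complex.Re R)) /= cos_y1.
by move: cos_y_lt1; rewrite cos_y1 ltxx.
Qed.

Lemma prim_root_expi s : (0 < s)%N -> s.-primitive_root (expi (2 * pi / s%:R)).
Proof.
move=> s_gt0; rewrite /primitive_root_of_unity s_gt0; apply/forallP => i /=.
have s_neq0 : s%:R != 0 :> R by rewrite pnatr_eq0 -lt0n.
have two_pi_gt0 : (0 : R) < pi *+ 2 by rewrite pmulrn_lgt0 // pi_gt0.
rewrite unity_rootE -expiMn mulrCA mulr_natl.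
have [->|neq_is] := eqVneq i.+1 s.
  by rewrite divff // mulr1 /expi cos2pi sin2pi eqxx.
have lt_is : (i.+1 < s)%N by rewrite ltn_neqAle neq_is ltn_ord.
have ratio_gt0 : (0 : R) < i.+1%:R / s%:R by rewrite divr_gt0 ?ltr0n.
rewrite (negbTE (expi_neq1 _)) // mulr_gt0 //= gtr_pMr //.
by rewrite ltr_pdivrMr ?ltr0n // mul1r ltr_nat.
Qed.

Lemma ramanujan_sum_expi s t : ramanujan_sum R s t%:Z =
  \sum_(1 <= h < s.+1 | coprime h s) expi (2 * pi / s%:R) ^+ (h * t).
Proof.
apply: eq_bigr => h _; rewrite -expiMn natrM /=.
by congr expi; rewrite pmulrn; ring.
Qed.

End ComplexExponential.

Theorem proposition2p16 (R : realType) (k s : nat) :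
  (0 < k)%N -> (0 < s)%N -> (s %| k)%N ->
  forall t : nat, (t <= s - 1)%N ->
    ramanujan_sum R s t%:Z =
    ((\sum_(0 <= j < k %/ s) sigma0 k s (j * s + t)) %:~R : R[i]).
Proof.
move=> k_gt0 s_gt0 dvd_sk t le_ts1; have lt_ts : (t < s)%N by lia.
have prim_zeta := prim_root_expi R s_gt0.
rewrite ramanujan_sum_expi (sum_coprime_exp_rev prim_zeta (ltnW lt_ts)).
by rewrite (sum_sigma0_prim_root prim_zeta).
Qed.
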